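(* Let $E$ be a $k$-dimensional subspace of $\mathbb{C}^n$ with $k>1$ such that $E$ does not contain the fully synchrony subspace $F=\{x_1=\cdots=x_n\}$. Then there exist one-dimensional subspaces $J_1,\dots,J_k$ of $E$, each special in $E$, such that $E=J_1\oplus\cdots\oplus J_k$.
   Context: A polydiagonal is a subspace of $\mathbb{C}^n$ of the form $\{x\in\mathbb{C}^n : x_i=x_j \text{ for all } (i,j)\in R\}$ for some (possibly empty) set $R$ of pairs of indices in $\{1,\dots,n\}$. For a subspace $W\subseteq\mathbb{C}^n$, $P(W)$ denotes the smallest polydiagonal containing $W$. Given a subspace $E$ of $\mathbb{C}^n$, a subspace $W$ of $E$ is called special in $E$ if for every subspace $U$ of $E$ with $\dim U=\dim W$ and $P(U)\subseteq P(W)$ one has $P(U)=P(W)$. *)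

(* C^n is modelled as row vectors 'rV[C]_n over an
   arbitrary numeric algebraically closed field C (e.g. algC); subspaces are
   row spaces of matrices (mxalgebra). *)
From HB Require Import structures.
From mathcomp Require Import all_boot all_order all_algebra.
Set Implicit Arguments. Unset Strict Implicit. Unset Printing Implicit Defensive.
Import GRing.Theory Num.Theory.
Local Open Scope ring_scope.

Section Polydiag.
Variables (C : numClosedFieldType) (n : nat).

Definition diff_col (p : 'I_n * 'I_n) : 'cV[C]_n :=
  \col_k ((k == p.1)%:R - (k == p.2)%:R).

(* polydiagonal {x | x_i = x_j for all (i,j) in R} as a subspace (row space) *)
Definition polydiag (R : {set 'I_n * 'I_n}) : 'M[C]_n :=
  (\bigcap_(p in R) kermx (diff_col p))%MS.

Definition is_polydiag (D : 'M[C]_n) : Prop :=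
  exists R : {set 'I_n * 'I_n}, (D == polydiag R)%MS.

(* P(W): the smallest polydiagonal containing W, namely the polydiagonal
   of all pairs (i,j) with x_i = x_j for every x in W (rows of W span W) *)
Definition eqpairs (W : 'M[C]_n) : {set 'I_n * 'I_n} :=
  [set p | [forall r : 'I_n, W r p.1 == W r p.2]].

Definition Pcl (W : 'M[C]_n) : 'M[C]_n := polydiag (eqpairs W).

Definition special_in (E W : 'M[C]_n) : Prop :=
  (W <= E)%MS /\
  forall U : 'M[C]_n, (U <= E)%MS -> \rank U = \rank W ->
    (Pcl U <= Pcl W)%MS -> (Pcl U == Pcl W)%MS.

(* the full synchrony subspace F = {x_1 = ... = x_n} *)
Definition synchrony : 'rV[C]_n := const_mx 1.

End Polydiag.

From HB Require Import structures.
From mathcomp Require Import all_boot all_order all_algebra.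
From mathcomp Require Import ring.
From Stdlib Require Import Classical.
Import GRing.Theory Num.Theory.
Set Implicit Arguments. Unset Strict Implicit. Unset Printing Implicit Defensive.
Local Open Scope ring_scope.

(* For a vector v let agree v be the set of index pairs (i,j)
   with v_i = v_j; the polydiagonal closure P(W) is cut out by the pairs on
   which every vector of W agrees.  Call v an agreement-maximal vector of E
   if v is a nonzero vector of E and no nonzero u in E has agree u strictly
   larger than agree v.
   1. The line spanned by an agreement-maximal vector is special in E: a
      one-dimensional U with P(U) <= P(<v>) is spanned by some u whose
      agreement set contains agree v, hence equals it by maximality.
   2. If E does not contain the synchrony vector, agreement-maximal vectors
      span E: a non-maximal x in E is dominated by some nonzero u in E, and
      since u is not constant, x - c u agrees on strictly more pairs for a
      suitable c; induction on the number of disagreeing pairs.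
   3. Any spanning family of E contains a basis of E.
   The theorem follows: the lines through such a basis are special in E and
   form a direct sum decomposition of E. *)

Section RowSpaces.
Variables (F : fieldType) (n : nat).

Lemma nz_coord (v : 'rV[F]_n) : v != 0 -> exists j, v 0 j != 0.
Proof.
move=> v0; apply/existsP; apply: contraNT v0 => /existsPn v0.
by apply/eqP/rowP => j; rewrite mxE; apply/eqP/negPn.
Qed.

Lemma rank_col_mx_notin m (g : 'rV[F]_n) (A : 'M[F]_(m, n)) :
  ~~ (g <= A)%MS -> \rank (col_mx g A) = (\rank A).+1.
Proof.
move=> gA; rewrite -addsmxE; apply/eqP; rewrite eqn_leq.
apply/andP; split.
  apply: leq_trans (mxrank_adds_leqif g A).1 _.
  by rewrite -[X in (_ <= X)%N]add1n leq_add2r rank_leq_row.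
have ltA : (A < g + A)%MS by rewrite ltmxE addsmxSr addsmx_sub submx_refl andbT.
by move: ltA; rewrite ltmxErank => /andP[].
Qed.

Lemma col_mx_rows (P : 'rV[F]_n -> Prop) m (g : 'rV[F]_n) (A : 'M[F]_(m, n)) :
  P g -> (forall i, P (row i A)) -> forall i, P (row i (col_mx g A)).
Proof.
move=> Pg PA i; rewrite -(splitK i); case: (split i) => j /=.
  by rewrite rowKu (_ : row j g = g) //; apply/rowP => c; rewrite mxE (ord1 j).
by rewrite rowKd.
Qed.

Lemma basis_of_spanning (E : 'M[F]_n) (P : 'rV[F]_n -> Prop) :
  (forall m (G : 'M[F]_(m, n)), (forall v, P v -> (v <= G)%MS) -> (E <= G)%MS) ->
  exists2 A : 'M[F]_(\rank E, n), (forall i, P (row i A)) & \rank A = \rank E.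
Proof.
move=> spanP.
suff ind m : (m <= \rank E)%N ->
    exists2 A : 'M[F]_(m, n), (forall i, P (row i A)) & \rank A = m.
  exact: ind.
elim: m => [|m IH] lemE; first by exists 0; [case | rewrite mxrank0].
have [A PA rA] := IH (ltnW lemE).
have [g Pg gA] : exists2 g, P g & ~~ (g <= A)%MS.
  apply: NNPP => noext.
  have EA : (E <= A)%MS.
    by apply: spanP => v Pv; apply/negPn/negP => vA; apply: noext; exists v.
  by move: (mxrankS EA); rewrite rA leqNgt lemE.
exists (col_mx g A); first exact: col_mx_rows.
by rewrite rank_col_mx_notin // rA.
Qed.

End RowSpaces.

Section Agreement.
Variables (C : numClosedFieldType) (n : nat).

Definition agree (v : 'rV[C]_n) : {set 'I_n * 'I_n} :=
  [set p | v 0 p.1 == v 0 p.2].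

Definition line_mx (v : 'rV[C]_n) : 'M[C]_n := \matrix_(r, c) v 0 c.

Definition agree_max (E : 'M[C]_n) (v : 'rV[C]_n) : Prop :=
  [/\ (v <= E)%MS, v != 0 & forall u : 'rV[C]_n, (u <= E)%MS -> u != 0 ->
      agree v \subset agree u -> agree u \subset agree v].

Lemma diff_colE (v : 'rV[C]_n) p :
  (v *m diff_col C p) 0 0 = v 0 p.1 - v 0 p.2.
Proof.
have coord q : \sum_i v 0 i * (i == q)%:R = v 0 q.
  rewrite (bigD1 q) //= eqxx mulr1 big1 ?addr0 // => i /negPf->.
  by rewrite mulr0.
rewrite !mxE; under eq_bigr do rewrite mxE mulrBr.
by rewrite sumrB !coord.
Qed.

Lemma sub_polydiag (R : {set 'I_n * 'I_n}) (v : 'rV[C]_n) :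
  (v <= polydiag C R)%MS = (R \subset agree v).
Proof.
apply/sub_bigcapmxP/subsetP => vR p /vR.
  move/sub_kermxP/matrixP/(_ 0 0); rewrite diff_colE mxE => /eqP.
  by rewrite subr_eq0 inE.
rewrite inE => /eqP vp; apply/sub_kermxP/matrixP => i j.
by rewrite (ord1 i) (ord1 j) diff_colE mxE vp subrr.
Qed.

Lemma subset_eqpairsP (S : {set 'I_n * 'I_n}) (W : 'M[C]_n) :
  reflect (forall r, S \subset agree (row r W)) (S \subset eqpairs W).
Proof.
apply: (iffP subsetP) => [SW r | SW p Sp].
  by apply/subsetP => p /SW; rewrite !inE !mxE => /forallP.
by rewrite inE; apply/forallP => r; have := subsetP (SW r) p Sp; rewrite inE !mxE.
Qed.

Lemma sub_Pcl (W : 'M[C]_n) : (W <= Pcl W)%MS.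
Proof.
apply/row_subP => r; rewrite sub_polydiag.
by move: r; apply/subset_eqpairsP.
Qed.

Lemma eqpairs_sub_agree (W : 'M[C]_n) (v : 'rV[C]_n) :
  (v <= W)%MS -> eqpairs W \subset agree v.
Proof. by move=> vW; rewrite -sub_polydiag (submx_trans vW (sub_Pcl W)). Qed.

Lemma Pcl_sub_eqpairs (U W : 'M[C]_n) :
  (Pcl U <= Pcl W)%MS -> eqpairs W \subset eqpairs U.
Proof.
move=> PUW; apply/subset_eqpairsP => r; rewrite -sub_polydiag.
exact: submx_trans (row_sub r U) (submx_trans (sub_Pcl U) PUW).
Qed.

Lemma row_line_mx (v : 'rV[C]_n) r : row r (line_mx v) = v.
Proof. by apply/rowP => c; rewrite !mxE. Qed.

Lemma line_mx_eqmx (v : 'rV[C]_n) : (line_mx v :=: v)%MS.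
Proof.
apply/eqmxP/andP; split; first by apply/row_subP => r; rewrite row_line_mx.
have [->|/nz_coord[j _]] := eqVneq v 0; first exact: sub0mx.
by have := row_sub j (line_mx v); rewrite row_line_mx.
Qed.

Lemma eqpairs_line_mx (v : 'rV[C]_n) : eqpairs (line_mx v) = agree v.
Proof.
apply/setP => p; rewrite !inE.
by apply/forallP/idP => [/(_ p.1) | vp r]; rewrite !mxE.
Qed.

Lemma agree_max_special (E : 'M[C]_n) (v : 'rV[C]_n) :
  agree_max E v -> special_in E (line_mx v).
Proof.
case=> vE v0 vmax; split; first by rewrite line_mx_eqmx.
move=> U UE rU PUv.
have /rowV0Pn[u uU u0] : U != 0.
  by rewrite -mxrank_eq0 rU line_mx_eqmx rank_rV v0.
have vU : agree v \subset eqpairs U.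
  by rewrite -eqpairs_line_mx; apply: Pcl_sub_eqpairs.
have Uu : eqpairs U \subset agree u := eqpairs_sub_agree uU.
have uv : agree u \subset agree v.
  exact: vmax u (submx_trans uU UE) u0 (subset_trans vU Uu).
have eqU : eqpairs U = eqpairs (line_mx v).
  by apply/eqP; rewrite eqEsubset eqpairs_line_mx vU (subset_trans Uu uv).
by rewrite /Pcl eqU !submx_refl.
Qed.

Lemma nonconstant (E : 'M[C]_n) (u : 'rV[C]_n) :
  ~~ (synchrony C n <= E)%MS -> (u <= E)%MS -> u != 0 ->
  exists a b, u 0 a != u 0 b.
Proof.
move=> nsE uE u0; have [j uj] := nz_coord u0.
have [/existsP[a ua] | /existsPn cst] := boolP [exists a, u 0 a != u 0 j].
  by exists a, j.
case/negP: nsE; rewrite (_ : synchrony C n = (u 0 j)^-1 *: u) ?scalemx_sub //.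
apply/rowP => i; rewrite !mxE; move/negPn/eqP: (cst i) => ->.
by rewrite mulVf.
Qed.

Lemma agree_refine (x u : 'rV[C]_n) a b :
  agree x \subset agree u -> u 0 a != u 0 b ->
  exists c, agree x \proper agree (x - c *: u).
Proof.
move=> xu uab; have du : u 0 a - u 0 b != 0 by rewrite subr_eq0.
exists ((x 0 a - x 0 b) / (u 0 a - u 0 b)); set c := _ / _.
have yE i : (x - c *: u) 0 i = x 0 i - c * u 0 i by rewrite !mxE.
rewrite properE; apply/andP; split.
  apply/subsetP => p px; have := subsetP xu p px.
  by move: px; rewrite !inE !yE => /eqP-> /eqP->.
apply/subsetPn; exists (a, b).
  by rewrite inE !yE /=; apply/eqP; rewrite /c; field.
by apply: contra uab => /(subsetP xu); rewrite inE.
Qed.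

Lemma agree_max_span (E : 'M[C]_n) : ~~ (synchrony C n <= E)%MS ->
  forall m (G : 'M[C]_(m, n)),
  (forall v, agree_max E v -> (v <= G)%MS) -> (E <= G)%MS.
Proof.
move=> nsE m G maxG.
suff inG : forall x : 'rV[C]_n, (x <= E)%MS -> (x <= G)%MS.
  by apply/row_subP => r; apply/inG/row_sub.
move=> x; have [N] := ubnP #|~: agree x|; elim: N x => // N IH x; rewrite ltnS => xN xE.
have IHy y : agree x \proper agree y -> (y <= E)%MS -> (y <= G)%MS.
  by move=> xy; apply: IH; rewrite (leq_trans _ xN) // proper_card // properC.
have [->|x0] := eqVneq x 0; first exact: sub0mx.
case: (classic (exists u, [/\ (u <= E)%MS, u != 0 & agree x \proper agree u]))
  => [[u [uE u0 xu]] | nodom]; last first.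
  apply: maxG; split=> // u uE u0 xu; apply/negPn/negP => ux.
  by apply: nodom; exists u; rewrite properE xu.
have [a [b uab]] := nonconstant nsE uE u0.
have [c xy] := agree_refine (proper_sub xu) uab.
have yE : (x - c *: u <= E)%MS by rewrite addmx_sub ?eqmx_opp ?scalemx_sub.
by rewrite -(subrK (c *: u) x) addmx_sub ?scalemx_sub ?IHy.
Qed.

Lemma sum_line_mx m (A : 'M[C]_(m, n)) :
  (\sum_i line_mx (row i A) :=: A)%MS.
Proof.
apply/eqmxP/andP; split.
  by apply/sumsmx_subP => i _; rewrite line_mx_eqmx row_sub.
by apply/row_subP => i; apply: (sumsmx_sup i) => //; rewrite line_mx_eqmx.
Qed.

Lemma mxdirect_line_mx m (A : 'M[C]_(m, n)) :
  row_free A -> mxdirect (\sum_i line_mx (row i A)).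
Proof.
move=> /eqP rA; have rS : \rank (\sum_i line_mx (row i A)) = m.
  by rewrite sum_line_mx.
rewrite mxdirectE /= rS eqn_leq; apply/andP; split.
  by rewrite -[X in (X <= _)%N]rS (mxrank_sum_leqif _).1.
apply: (@leq_trans (\sum_(i < m) 1)%N); last by rewrite sum1_card card_ord.
by apply: leq_sum => i _; rewrite line_mx_eqmx rank_leq_row.
Qed.

End Agreement.

Theorem mainTheorem3 (C : numClosedFieldType) (n k : nat) (E : 'M[C]_n) :
  (1 < k)%N -> \rank E = k -> ~~ (synchrony C n <= E)%MS ->
  exists J : 'I_k -> 'M[C]_n,
    [/\ forall i, \rank (J i) = 1%N,
        forall i, special_in E (J i),
        mxdirect (\sum_i J i) &
        (\sum_i J i == E)%MS].
Proof.
move=> _ rE nsE; subst k.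
have [A Amax rA] := basis_of_spanning (agree_max_span nsE).
have AE : (A <= E)%MS by apply/row_subP => i; case: (Amax i).
exists (fun i => line_mx (row i A)); split.
- by move=> i; rewrite line_mx_eqmx rank_rV; case: (Amax i) => _ ->.
- by move=> i; apply: agree_max_special.
- by apply: mxdirect_line_mx; rewrite /row_free rA.
- by rewrite !sum_line_mx -(mxrank_leqif_eq AE).2 rA.
Qed.
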